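(* Let $s\geq 3$ and let $p,q$ be coprime integers with $q>0$ and $p/q\geq 4s+7$. Then for every homomorphism (action) $\Phi$ of $G_{K_s}(p,q)$ into $\mathrm{Homeo}^+(\mathbb{R})$ there is a point $x\in\mathbb{R}$ fixed by every element of $\Phi(G_{K_s}(p,q))$.
   Context: Let $R=c\,l\,c\,l^{-1}c^{-1}l^{-s}c^{-1}l^{-1}c\,l\,c\,l^{s-1}$, $M=c$ and $L=c^{-(2s-2)}\,l\,c\,l^{s}\,c\,l^{s}\,c\,l\,c^{-(2s+9)}$, and $G_{K_s}(p,q)=\langle c,l\mid R,\ M^pL^q\rangle$, the fundamental group of $p/q$ Dehn surgery on the $(-2,3,2s+1)$-pretzel knot. $\mathrm{Homeo}^+(\mathbb{R})$ is the group of orientation-preserving homeomorphisms of $\mathbb{R}$. *)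

From Stdlib Require Import Reals ZArith List.
Open Scope R_scope.

(* An orientation-preserving homeomorphism of R: a continuous strictly
   increasing bijection (its inverse is then automatically continuous). *)
Record homeo := Homeo {
  hf : R -> R;
  hinv : R -> R;
  hf_hinv : forall x, hf (hinv x) = x;
  hinv_hf : forall x, hinv (hf x) = x;
  hf_cont : continuity hf;
  hf_incr : forall x y, x < y -> hf x < hf y
}.

Definition hpow (h : homeo) (n : Z) : R -> R :=
  match n with
  | Z0 => fun x => x
  | Zpos k => Nat.iter (Pos.to_nat k) (hf h)
  | Zneg k => Nat.iter (Pos.to_nat k) (hinv h)
  end.

(* A word in the free group on c, l: a list of syllables (gen, exponent),
   gen = true for c, false for l. *)
Definition word := list (bool * Z).

(* Evaluation at the pair (Φ(c), Φ(l)) = (a, b); group law = composition,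
   (g h)(x) = g (h x). *)
Fixpoint eval_word (a b : homeo) (w : word) : R -> R :=
  match w with
  | nil => fun x => x
  | (g, n) :: w' => fun x => hpow (if g then a else b) n (eval_word a b w' x)
  end.

Definition cc (n : Z) : word := (true, n) :: nil.
Definition ll (n : Z) : word := (false, n) :: nil.

Fixpoint wpow (w : word) (n : nat) : word :=
  match n with O => nil | S k => w ++ wpow w k end.

Definition relR (s : Z) : word :=
  cc 1 ++ ll 1 ++ cc 1 ++ ll (-1) ++ cc (-1) ++ ll (- s) ++ cc (-1) ++ ll (-1)
  ++ cc 1 ++ ll 1 ++ cc 1 ++ ll (s - 1).

Definition wordM : word := cc 1.

Definition wordL (s : Z) : word :=
  cc (- (2 * s - 2)) ++ ll 1 ++ cc 1 ++ ll s ++ cc 1 ++ ll s ++ cc 1 ++ ll 1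
  ++ cc (- (2 * s + 9)).

(* M^p L^q (q > 0); since M = c, M^p is the single syllable c^p (p in Z). *)
Definition surgery_rel (s p q : Z) : word :=
  cc p ++ wpow (wordL s) (Z.to_nat q).

(* A homomorphism G_{K_s}(p,q) -> Homeo+(R) is exactly a pair (a,b) = (Φ(c),Φ(l))
   on which both relators evaluate to the identity. *)
Definition is_action (s p q : Z) (a b : homeo) : Prop :=
  (forall x, eval_word a b (relR s) x = x) /\
  (forall x, eval_word a b (surgery_rel s p q) x = x).

From Stdlib Require Import Reals ZArith List.
From Stdlib Require Import Lia Lra Classical.
Open Scope R_scope.

(* Proof of Proposition 3.5.  Write a = Φ(c) and b = Φ(l).

   1. Algebra of the presentation.  The relator R is equivalent to the
      identity  b a b^s a b = a b a b^(s-1) a b a,  which says exactly that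
      X := b a b^s a b^s a b  commutes with a.  Since L = a^(-(2s-2)) X a^(-(2s+9)),
      we get L^q = a^(-(4s+7)q) X^q, and the surgery relation becomes
      a^n X^q = id  with  n = p - (4s+7)q >= 0.
   2. Sign opposition.  If a moves a point x up while b does not move it down,
      then every letter of X keeps [x, +oo) and a pushes it strictly up, so
      a^n X^q moves x strictly up: impossible.  Reflecting R through 0 turns an
      action into an action and exchanges "up" and "down", giving the dual.
   3. Conclusion.  If b had no fixed point it would move every point in the
      same direction (intermediate value theorem), up after a reflection; by
      opposition a then moves no point up, and the two sides of the identity of
      step 1 evaluated at 0 compare strictly: a contradiction.  So b fixes some
      x, opposition forces a to fix x too, and x is fixed by every word.

   The argument only uses s >= 0. *)

Lemma hinv_lt (h : homeo) x y : x < y -> hinv h x < hinv h y.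
Proof.
  intro Hxy. destruct (Rlt_le_dec (hinv h x) (hinv h y)) as [Hlt | Hge]; [exact Hlt |].
  destruct Hge as [Hgt | Heq].
  - apply (hf_incr h) in Hgt. rewrite !hf_hinv in Hgt. lra.
  - apply (f_equal (hf h)) in Heq. rewrite !hf_hinv in Heq. lra.
Qed.

Lemma hpow_succ h n x : hpow h (Z.succ n) x = hf h (hpow h n x).
Proof.
  destruct n as [| k | k].
  - reflexivity.
  - change (Z.succ (Zpos k)) with (Zpos (k + 1)). unfold hpow.
    rewrite Pos2Nat.inj_add, Pos2Nat.inj_1, Nat.add_1_r. reflexivity.
  - destruct (Pos.succ_pred_or k) as [-> | Hk].
    + simpl. rewrite hf_hinv. reflexivity.
    + rewrite <- Hk.
      replace (Z.succ (Zneg (Pos.succ (Pos.pred k)))) with (Zneg (Pos.pred k)) by lia.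
      unfold hpow. rewrite Pos2Nat.inj_succ, Nat.iter_succ, hf_hinv. reflexivity.
Qed.

Lemma hpow_pred h n x : hpow h (Z.pred n) x = hinv h (hpow h n x).
Proof. rewrite <- (Z.succ_pred n) at 2. rewrite hpow_succ, hinv_hf. reflexivity. Qed.

Lemma hpow_add h m n x : hpow h (m + n) x = hpow h m (hpow h n x).
Proof.
  revert x. induction m using Z.peano_ind; intro x.
  - reflexivity.
  - rewrite Z.add_succ_l, !hpow_succ, IHm. reflexivity.
  - rewrite Z.add_pred_l, !hpow_pred, IHm. reflexivity.
Qed.

Lemma hpow_peel_r h n x : hpow h n x = hpow h (n - 1) (hpow h 1 x).
Proof. rewrite <- hpow_add. f_equal. lia. Qed.

Lemma hpow_peel_l h n x : hpow h n x = hpow h 1 (hpow h (n - 1) x).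
Proof. rewrite <- hpow_add. f_equal. lia. Qed.

Lemma hpow_cancel h n x : hpow h n (hpow h (- n) x) = x.
Proof. rewrite <- hpow_add, Z.add_opp_diag_r. reflexivity. Qed.

Lemma hpow_incr h n : strict_increasing (hpow h n).
Proof.
  induction n using Z.peano_ind; intros x y Hxy.
  - exact Hxy.
  - rewrite !hpow_succ. apply hf_incr, IHn, Hxy.
  - rewrite !hpow_pred. apply hinv_lt, IHn, Hxy.
Qed.

Lemma hpow_le h n x y : x <= y -> hpow h n x <= hpow h n y.
Proof. intros [Hlt | ->]; [left; apply hpow_incr, Hlt | right; reflexivity]. Qed.

Lemma hpow_inj h n x y : hpow h n x = hpow h n y -> x = y.
Proof.
  intro Heq. destruct (Rtotal_order x y) as [Hlt | [Hxy | Hlt]]; [| exact Hxy |];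
    apply (hpow_incr h n) in Hlt; lra.
Qed.

Lemma hpow_fix h x : hf h x = x -> forall n, hpow h n x = x.
Proof.
  intros Hx n. induction n using Z.peano_ind.
  - reflexivity.
  - rewrite hpow_succ, IHn. exact Hx.
  - rewrite hpow_pred, IHn. rewrite <- Hx at 1. apply hinv_hf.
Qed.

Lemma hpow_nonneg_up h x : x <= hf h x -> forall n, (0 <= n)%Z -> x <= hpow h n x.
Proof.
  intros Hx n Hn. pattern n; apply natlike_ind; [simpl; lra | | exact Hn].
  intros m _ IH. rewrite hpow_succ.
  apply Rle_trans with (hf h x); [exact Hx | apply (hpow_le h 1), IH].
Qed.

Lemma hpow_comm (h : homeo) (F : R -> R) :
  (forall x, hf h (F x) = F (hf h x)) -> forall n x, hpow h n (F x) = F (hpow h n x).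
Proof.
  intros Hcomm.
  assert (Hcomm_inv : forall x, hinv h (F x) = F (hinv h x)).
  { intro x. rewrite <- (hinv_hf h (F (hinv h x))), Hcomm, hf_hinv. reflexivity. }
  intro n. induction n using Z.peano_ind; intro x.
  - reflexivity.
  - rewrite !hpow_succ, IHn, Hcomm. reflexivity.
  - rewrite !hpow_pred, IHn, Hcomm_inv. reflexivity.
Qed.

Lemma eval_app a b w1 w2 x :
  eval_word a b (w1 ++ w2) x = eval_word a b w1 (eval_word a b w2 x).
Proof. induction w1 as [| [g n] w1 IH]; simpl; [reflexivity | rewrite IH; reflexivity]. Qed.

Lemma eval_wpow a b w n x : eval_word a b (wpow w n) x = Nat.iter n (eval_word a b w) x.
Proof. induction n; simpl; [reflexivity | rewrite eval_app, IHn; reflexivity]. Qed.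

Lemma eval_fix a b x : hf a x = x -> hf b x = x -> forall w, eval_word a b w x = x.
Proof.
  intros Ha Hb w. induction w as [| [g n] w IH]; simpl; [reflexivity |].
  rewrite IH. destruct g; apply hpow_fix; assumption.
Qed.

(** Conjugating by x |-> -x maps Homeo+(R) to itself, preserves every relation
   and exchanges the roles of "moving up" and "moving down". *)

Definition hrefl (h : homeo) : homeo.
Proof.
  refine (Homeo (fun x => - hf h (- x)) (fun x => - hinv h (- x)) _ _ _ _).
  - intro x. rewrite Ropp_involutive, hf_hinv. apply Ropp_involutive.
  - intro x. rewrite Ropp_involutive, hinv_hf. apply Ropp_involutive.
  - intro x. apply continuity_pt_opp.
    apply (continuity_pt_comp (fun x => - x) (hf h)).
    + apply continuity_pt_opp, derivable_continuous_pt, derivable_pt_id.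
    + apply hf_cont.
  - intros x y Hxy. apply Ropp_lt_contravar, hf_incr. lra.
Defined.

Lemma hpow_refl h n x : hpow (hrefl h) n x = - hpow h n (- x).
Proof.
  revert x. induction n using Z.peano_ind; intro x.
  - simpl. lra.
  - rewrite !hpow_succ, IHn. simpl. rewrite Ropp_involutive. reflexivity.
  - rewrite !hpow_pred, IHn. simpl. rewrite Ropp_involutive. reflexivity.
Qed.

Lemma eval_refl a b w x : eval_word (hrefl a) (hrefl b) w x = - eval_word a b w (- x).
Proof.
  induction w as [| [g n] w IH]; simpl; [lra |].
  rewrite IH. destruct g; rewrite hpow_refl, Ropp_involutive; reflexivity.
Qed.

Lemma is_action_refl s p q a b : is_action s p q a b -> is_action s p q (hrefl a) (hrefl b).
Proof.
  intros [HR HS]. split; intro x; rewrite eval_refl; [rewrite HR | rewrite HS]; lra.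
Qed.

Lemma incr_keep_above f x0 y : strict_increasing f -> x0 <= f x0 -> x0 <= y -> x0 <= f y.
Proof.
  intros Hf Hx0 [Hlt | <-]; [| exact Hx0]. apply Rle_trans with (f x0); [exact Hx0 |].
  left. apply Hf, Hlt.
Qed.

Lemma incr_keep_above_strict f x0 y : strict_increasing f -> x0 <= f x0 -> x0 < y -> x0 < f y.
Proof. intros Hf Hx0 Hy. apply Rle_lt_trans with (f x0); [exact Hx0 | apply Hf, Hy]. Qed.

Lemma incr_push_above f x0 y : strict_increasing f -> x0 < f x0 -> x0 <= y -> x0 < f y.
Proof.
  intros Hf Hx0 [Hlt | <-]; [| exact Hx0]. apply Rlt_trans with (f x0); [exact Hx0 |].
  apply Hf, Hlt.
Qed.

Lemma iter_push_above (F : R -> R) x0 :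
  (forall y, x0 <= y -> x0 < F y) -> forall n, (1 <= n)%nat -> x0 < Nat.iter n F x0.
Proof.
  intros HF n Hn. destruct n as [| n]; [lia |]. rewrite Nat.iter_succ. apply HF.
  clear Hn. induction n as [| n IH]; simpl; [lra |]. left. apply HF, IH.
Qed.

(* The element X = b a b^s a b^s a b, so that L = a^(-(2s-2)) X a^(-(2s+9)). *)
Definition Xmap (a b : homeo) (s : Z) (x : R) : R :=
  hpow b 1 (hpow a 1 (hpow b s (hpow a 1 (hpow b s (hpow a 1 (hpow b 1 x)))))).

Lemma relator_identity a b s : (forall x, eval_word a b (relR s) x = x) -> forall y,
  hpow b 1 (hpow a 1 (hpow b s (hpow a 1 (hpow b 1 y)))) =
  hpow a 1 (hpow b 1 (hpow a 1 (hpow b (s - 1) (hpow a 1 (hpow b 1 (hpow a 1 y)))))).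
Proof.
  intros HR y.
  (* R at the point a b a b^(s-1) a b a y; the three outermost letters of R
     then cancel against the left side. *)
  assert (E : hpow a 1 (hpow b 1 (hpow a 1 (hpow b (-1) (hpow a (-1) (hpow b (- s)
    (hpow a (-1) (hpow b (-1) (hpow a 1 (hpow b 1 (hpow a 1 (hpow b (s - 1)
    (hpow a 1 (hpow b 1 (hpow a 1 y)))))))))))))) = hpow a 1 (hpow b 1 (hpow a 1 y)))
    by exact (HR _).
  apply hpow_inj, hpow_inj, hpow_inj in E.
  rewrite <- E at 1. rewrite !hpow_cancel. reflexivity.
Qed.

(* Both sides below rewrite, by two uses of the relator identity, to
   a b a b^(s-1) a b a b^(s-1) a b a x. *)
Lemma Xmap_comm_a a b s : (forall x, eval_word a b (relR s) x = x) ->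
  forall x, hpow a 1 (Xmap a b s x) = Xmap a b s (hpow a 1 x).
Proof.
  intros HR x. unfold Xmap.
  rewrite (hpow_peel_r b s (hpow a 1 (hpow b s (hpow a 1 (hpow b 1 x))))).
  rewrite (relator_identity a b s HR x).
  rewrite (hpow_peel_l b s (hpow a 1 (hpow b 1 (hpow a 1 x)))).
  rewrite (relator_identity a b s HR). reflexivity.
Qed.

Lemma Xmap_comm a b s : (forall x, eval_word a b (relR s) x = x) ->
  forall n x, hpow a n (Xmap a b s x) = Xmap a b s (hpow a n x).
Proof. intro HR. apply hpow_comm, (Xmap_comm_a a b s HR). Qed.

(* L^n = a^(-(4s+7)n) X^n, because X commutes with a. *)
Lemma longitude_power a b s : (forall x, eval_word a b (relR s) x = x) -> forall n x,
  Nat.iter n (eval_word a b (wordL s)) x =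
  hpow a (- ((4 * s + 7) * Z.of_nat n)) (Nat.iter n (Xmap a b s) x).
Proof.
  intros HR n. induction n as [| n IH]; intro x.
  - simpl. rewrite Z.mul_0_r. reflexivity.
  - rewrite !Nat.iter_succ, IH.
    change (eval_word a b (wordL s) ?z) with
      (hpow a (- (2 * s - 2)) (Xmap a b s (hpow a (- (2 * s + 9)) z))).
    rewrite <- hpow_add, <- (Xmap_comm a b s HR), <- hpow_add.
    f_equal; rewrite Nat2Z.inj_succ; ring.
Qed.

Lemma surgery_identity a b s p q : (0 < q)%Z -> is_action s p q a b -> forall x,
  hpow a (p - (4 * s + 7) * q) (Nat.iter (Z.to_nat q) (Xmap a b s) x) = x.
Proof.
  intros Hq [HR HS] x. specialize (HS x). unfold surgery_rel in HS.
  rewrite eval_app, eval_wpow, (longitude_power a b s HR) in HS. simpl in HS.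
  rewrite <- hpow_add, Z2Nat.id in HS by lia.
  rewrite <- HS at 2. reflexivity.
Qed.

Lemma Xmap_push_above a b s x0 : (0 <= s)%Z -> x0 < hf a x0 -> x0 <= hf b x0 ->
  forall y, x0 <= y -> x0 < Xmap a b s y.
Proof.
  intros Hs Ha Hb y Hy.
  assert (Bs : x0 <= hpow b s x0) by (apply hpow_nonneg_up; assumption).
  assert (Ia := hpow_incr a 1). assert (Ib := hpow_incr b 1). assert (Ibs := hpow_incr b s).
  unfold Xmap.
  apply incr_keep_above_strict; [exact Ib | exact Hb |].
  apply incr_push_above; [exact Ia | exact Ha |].
  apply incr_keep_above; [exact Ibs | exact Bs |].
  apply incr_keep_above; [exact Ia | left; exact Ha |].
  apply incr_keep_above; [exact Ibs | exact Bs |].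
  apply incr_keep_above; [exact Ia | left; exact Ha |].
  apply incr_keep_above; [exact Ib | exact Hb | exact Hy].
Qed.

Lemma opposition_up s p q a b : (0 <= s)%Z -> (0 < q)%Z -> ((4 * s + 7) * q <= p)%Z ->
  is_action s p q a b -> forall x, x < hf a x -> hf b x < x.
Proof.
  intros Hs Hq Hp Hact x Ha.
  destruct (Rlt_le_dec (hf b x) x) as [Hb | Hb]; [exact Hb | exfalso].
  assert (HX := iter_push_above _ x (Xmap_push_above a b s x Hs Ha Hb) (Z.to_nat q)
                  ltac:(lia)).
  assert (Hn : x <= hpow a (p - (4 * s + 7) * q) x) by (apply hpow_nonneg_up; [lra | lia]).
  assert (Hup := incr_keep_above_strict _ _ _ (hpow_incr a _) Hn HX).
  rewrite surgery_identity in Hup by assumption. lra.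
Qed.

Lemma opposition_down s p q a b : (0 <= s)%Z -> (0 < q)%Z -> ((4 * s + 7) * q <= p)%Z ->
  is_action s p q a b -> forall x, hf a x < x -> x < hf b x.
Proof.
  intros Hs Hq Hp Hact x Ha.
  assert (H := opposition_up s p q _ _ Hs Hq Hp (is_action_refl s p q a b Hact) (- x)).
  simpl in H. rewrite !Ropp_involutive in H. lra.
Qed.

Lemma fixed_point_between (f : R -> R) x1 x2 : continuity f ->
  f x1 < x1 -> x2 < f x2 -> exists z, f z = z.
Proof.
  intros Hf H1 H2.
  assert (Hid : continuity (fun x => x)) by exact (derivable_continuous _ derivable_id).
  destruct (Rtotal_order x1 x2) as [Hlt | [-> | Hlt]].
  - destruct (IVT (fun x => f x - x) x1 x2 (continuity_minus _ _ Hf Hid) Hlt)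
      as [z [_ Hz]]; [lra | lra | exists z; lra].
  - lra.
  - destruct (IVT (fun x => x - f x) x2 x1 (continuity_minus _ _ Hid Hf) Hlt)
      as [z [_ Hz]]; [lra | lra | exists z; lra].
Qed.

Lemma no_fixed_point_sign (h : homeo) : (~ exists x, hf h x = x) ->
  (forall x, x < hf h x) \/ (forall x, hf h x < x).
Proof.
  intro Hnofix.
  destruct (classic (forall x, x < hf h x)) as [Hup | Hnup]; [left; exact Hup | right].
  destruct (not_all_ex_not _ _ Hnup) as [x1 Hx1].
  assert (Hdown1 : hf h x1 < x1).
  { destruct (Rtotal_order (hf h x1) x1) as [Hlt | [Heq | Hgt]]; [exact Hlt | | lra].
    exfalso. apply Hnofix. exists x1. exact Heq. }
  intro x2. destruct (Rtotal_order (hf h x2) x2) as [Hlt | [Heq | Hgt]]; [exact Hlt | |];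
    exfalso; apply Hnofix.
  - exists x2. exact Heq.
  - exact (fixed_point_between _ x1 x2 (hf_cont h) Hdown1 Hgt).
Qed.

(* The relator forbids b moving every point up while a moves no point up:
   evaluated at 0 the left side of the relator identity would be strictly larger. *)
Lemma relator_no_up a b s : (forall x, eval_word a b (relR s) x = x) ->
  (forall x, x < hf b x) -> (forall x, hf a x <= x) -> False.
Proof.
  intros HR Hb Ha. pose proof (relator_identity a b s HR 0) as E.
  set (w := hpow a 1 (hpow b 1 0)) in *.
  set (v := hpow a 1 (hpow b 1 (hpow a 1 0))) in *.
  rewrite (hpow_peel_r b s w) in E.
  assert (L1 : hpow b 1 (hpow a 1 (hpow b (s - 1) w)) <
               hpow b 1 (hpow a 1 (hpow b (s - 1) (hpow b 1 w))))
    by (repeat apply hpow_incr; apply Hb).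
  assert (L2 : v <= w) by (unfold v, w; repeat apply hpow_le; apply Ha).
  assert (L3 : hpow b 1 (hpow a 1 (hpow b (s - 1) v)) <= hpow b 1 (hpow a 1 (hpow b (s - 1) w)))
    by (apply hpow_le, hpow_le, hpow_le; exact L2).
  assert (L4 := Ha (hpow b 1 (hpow a 1 (hpow b (s - 1) v)))).
  change (hf a ?z) with (hpow a 1 z) in L4. lra.
Qed.

Lemma b_not_everywhere_up s p q a b : (0 <= s)%Z -> (0 < q)%Z ->
  ((4 * s + 7) * q <= p)%Z -> is_action s p q a b -> ~ (forall x, x < hf b x).
Proof.
  intros Hs Hq Hp Hact Hb. apply (relator_no_up a b s (proj1 Hact) Hb).
  intro x. destruct (Rle_dec (hf a x) x) as [Ha | Ha]; [exact Ha | exfalso].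
  apply Rnot_le_lt, (opposition_up s p q a b Hs Hq Hp Hact) in Ha.
  specialize (Hb x). lra.
Qed.

(* So b has a fixed point; reflection handles the case of b moving every point down. *)
Lemma b_has_fixed_point s p q a b : (0 <= s)%Z -> (0 < q)%Z ->
  ((4 * s + 7) * q <= p)%Z -> is_action s p q a b -> exists x, hf b x = x.
Proof.
  intros Hs Hq Hp Hact. apply NNPP. intro Hnofix.
  destruct (no_fixed_point_sign b Hnofix) as [Hup | Hdown].
  - exact (b_not_everywhere_up s p q a b Hs Hq Hp Hact Hup).
  - apply (b_not_everywhere_up s p q _ _ Hs Hq Hp (is_action_refl s p q a b Hact)).
    intro x. simpl. specialize (Hdown (- x)). lra.
Qed.

Theorem proposition3p5 (s p q : Z) :
  (3 <= s)%Z -> (0 < q)%Z -> Z.gcd p q = 1%Z ->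
  ((4 * s + 7) * q <= p)%Z ->
  forall a b : homeo, is_action s p q a b ->
  exists x : R, forall w : word, eval_word a b w x = x.
Proof.
  intros Hs Hq _ Hp a b Hact.
  assert (Hs0 : (0 <= s)%Z) by lia.
  destruct (b_has_fixed_point s p q a b Hs0 Hq Hp Hact) as [x Hbx].
  (* By sign opposition, a cannot move a point fixed by b. *)
  assert (Hax : hf a x = x).
  { destruct (Rtotal_order (hf a x) x) as [Hlt | [Heq | Hgt]]; [| exact Heq |].
    - apply (opposition_down s p q a b Hs0 Hq Hp Hact) in Hlt. lra.
    - apply (opposition_up s p q a b Hs0 Hq Hp Hact) in Hgt. lra. }
  exists x. exact (eval_fix a b x Hax Hbx).
Qed.
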